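(* Let $m\le k\le n$ be positive integers, $\mathbf a_1,\dots,\mathbf a_n\in\mathbb R^m$, $\mathbf A=[\mathbf a_1,\dots,\mathbf a_n]\in\mathbb R^{m\times n}$, and let $\hat{\mathbf x}$ (with $(\hat{\mathbf x},\hat w)$) be an optimal solution of the convex relaxation $\max\{w: w\le[\det(\sum_{i\in[n]}x_i\mathbf a_i\mathbf a_i^\top)]^{1/m},\ \sum_i x_i=k,\ \mathbf x\in[0,1]^n\}$. Let $S\subseteq[n]$ with $|S|=s\le k$. For indeterminates $t_1,t_2,t_3$ define $\mathbf y\in\mathbb R^n$ by $y_i=t_3$ if $i\in S$ and $y_i=\hat x_i t_2$ otherwise, and $$F(t_1,t_2,t_3)=\det\Big(\mathbf I_n+t_1\,\mathrm{diag}(\mathbf y)^{1/2}\mathbf A^\top\mathbf A\,\mathrm{diag}(\mathbf y)^{1/2}+\mathrm{diag}(\mathbf y)\Big).$$ Then the coefficient of $t_1^{m}t_2^{k-s}t_3^{s}$ in $F(t_1,t_2,t_3)$ equals $$\sum_{\substack{R\subseteq[n],\,|R|=m\\ r:=|R\setminus S|\le k-s}}\ \prod_{j\in R\setminus S}\hat x_j\,\det\Big(\sum_{i\in R}\mathbf a_i\mathbf a_i^\top\Big)\sum_{\substack{W\subseteq[n]\setminus(S\cup R)\\ |W|=k-s-r}}\ \prod_{j\in W}\hat x_j.$$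
   Context: $[n]=\{1,\dots,n\}$, $\mathbf I_n$ is the $n\times n$ identity matrix and $\mathrm{diag}(\mathbf y)$ the diagonal matrix with diagonal $\mathbf y$. $F$ is regarded as a polynomial in $t_1,t_2,t_3$. *)

From HB Require Import structures.
From mathcomp Require Import all_boot all_order all_algebra.
From mathcomp Require Import reals exp.
Set Implicit Arguments. Unset Strict Implicit. Unset Printing Implicit Defensive.
Import Order.TTheory GRing.Theory Num.Theory.
Local Open Scope ring_scope.

Section Defs.
Variables (R : realType) (m n : nat).

Definition wgram (A : 'M[R]_(m, n)) (x : 'I_n -> R) : 'M[R]_m :=
  \sum_(i < n) x i *: (col i A *m (col i A)^T).

Definition gram_on (A : 'M[R]_(m, n)) (Rs : {set 'I_n}) : 'M[R]_m :=
  \sum_(i in Rs) (col i A *m (col i A)^T).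

Definition relax_feasible (A : 'M[R]_(m, n)) (k : nat) (x : 'I_n -> R) (w : R) :=
  [/\ \sum_(i < n) x i = k%:R,
      (forall i, 0 <= x i <= 1) &
      w <= powR (\det (wgram A x)) (m%:R^-1)].

Definition relax_optimal (A : 'M[R]_(m, n)) (k : nat) (x : 'I_n -> R) (w : R) :=
  relax_feasible A k x w /\
  (forall x' w', relax_feasible A k x' w' -> w' <= w).

(* Polynomial ring: outer variable t1, middle u2, inner u3, where
   t2 = u2^2 and t3 = u3^2 (formal square roots, so that diag(y)^(1/2)
   is a genuine matrix with polynomial entries). *)
Definition PR := {poly {poly {poly R}}}.
Definition cst (c : R) : PR := c%:P%:P%:P.
Definition T1 : PR := 'X.
Definition U2 : PR := ('X)%:P.
Definition U3 : PR := ('X)%:P%:P.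
Definition T2 : PR := U2 ^+ 2.
Definition T3 : PR := U3 ^+ 2.

Definition yvec (x : 'I_n -> R) (S : {set 'I_n}) : 'rV[PR]_n :=
  \row_i (if i \in S then T3 else cst (x i) * T2).
Definition ysqrt (x : 'I_n -> R) (S : {set 'I_n}) : 'rV[PR]_n :=
  \row_i (if i \in S then U3 else cst (Num.sqrt (x i)) * U2).

Definition Fpoly (A : 'M[R]_(m, n)) (x : 'I_n -> R) (S : {set 'I_n}) : PR :=
  \det (1%:M
        + T1 *: (diag_mx (ysqrt x S) *m map_mx cst (A^T *m A) *m diag_mx (ysqrt x S))
        + diag_mx (yvec x S)).

(* coefficient of t1^a t2^b t3^c, i.e. of t1^a u2^(2b) u3^(2c) *)
Definition coef3 (F : PR) (a b c : nat) : R := ((F`_a)`_(2 * b))`_(2 * c).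

End Defs.

From HB Require Import structures.
From mathcomp Require Import all_boot all_order all_algebra.
From mathcomp Require Import reals exp.
From mathcomp Require Import ring.
From mathcomp Require Import fingroup perm.
Import Order.TTheory GRing.Theory Num.Theory.
Local Open Scope ring_scope.
Set Implicit Arguments. Unset Strict Implicit. Unset Printing Implicit Defensive.

(* Expanding det(diag(1 + y) + t1 N) multilinearly along the rows, the
   coefficient of t1^m is the sum over |T| = m of prod_{i notin T} (1 + y_i)
   times the principal minor N[T].  For N = D A^T A D with D = diag(y)^(1/2),
   the columns of A indexed by T form a square matrix, so
   N[T] = prod_{i in T} y_i * det(sum_{i in T} a_i a_i^T), and the coefficient
   becomes sum_T det(sum_{i in T} a_i a_i^T) sum_{V \supseteq T} prod_{i in V} y_i.
   The monomial t2^(k-s) t3^s of prod_{i in V} y_i is present exactly when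
   S \subseteq V and |V \ S| = k - s; writing V = T u S u W yields the formula.
   Optimality of xhat is only used through xhat >= 0, which makes diag(y)^(1/2)
   a genuine square root of diag(y). *)

Section PrincipalMinors.
Variable Rg : comNzRingType.

(* [principal_mx N T] keeps the rows of N indexed by T and replaces the other
   rows by rows of the identity, so that its determinant is the principal
   minor of N on T. *)
Definition principal_mx n (N : 'M[Rg]_n) (T : {set 'I_n}) : 'M[Rg]_n :=
  \matrix_(i, j) if i \in T then N i j else (i == j)%:R.

Definition indic_mx n (T : {set 'I_n}) : 'M[Rg]_n := diag_mx (\row_i (i \in T)%:R).

Lemma det_sylvester p q (X : 'M[Rg]_(p, q)) (Y : 'M[Rg]_(q, p)) :
  \det (1%:M + X *m Y) = \det (1%:M + Y *m X).
Proof.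
pose M := block_mx (1%:M : 'M_p) (- X) Y (1%:M : 'M_q).
pose U := block_mx (1%:M : 'M_p) X 0 (1%:M : 'M_q).
have MU : M *m U = block_mx 1%:M 0 Y (1%:M + Y *m X).
  by rewrite mulmx_block !mulmx1 !mul1mx !mulmx0 ?mul0mx !addr0 subrr addrC.
have UM : U *m M = block_mx (1%:M + X *m Y) 0 Y 1%:M.
  by rewrite mulmx_block !mulmx1 !mul1mx !mul0mx !add0r ?addr0 addNr.
have := congr1 determinant MU; have := congr1 determinant UM.
rewrite !det_mulmx det_ublock det_lblock !det1 !mulr1 mul1r => -> ->.
by rewrite det_lblock det1 mul1r.
Qed.

Lemma principal_mxE n (N : 'M[Rg]_n) T :
  principal_mx N T = 1%:M + indic_mx T *m N - indic_mx T.
Proof.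
apply/matrixP => i j; rewrite /principal_mx /indic_mx mul_diag_mx !mxE.
case: (i \in T); last by rewrite mul0r addr0 mul0rn subr0.
by case: eqP => _ /=; ring.
Qed.

Lemma det_principal_mxZ n (c : Rg) (N : 'M[Rg]_n) T :
  \det (principal_mx (c *: N) T) = c ^+ #|T| * \det (principal_mx N T).
Proof.
have -> : principal_mx (c *: N) T =
    diag_mx (\row_i if i \in T then c else 1) *m principal_mx N T.
  by apply/matrixP => i j; rewrite mul_diag_mx !mxE; case: (i \in T); rewrite ?mul1r.
rewrite det_mulmx det_diag -prodr_const [in RHS]big_mkcond /=.
by congr (_ * _); apply: eq_bigr => i _; rewrite mxE; case: (i \in T).
Qed.

Lemma det_diag_addmx n (d : 'rV[Rg]_n) (N : 'M[Rg]_n) :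
  \det (diag_mx d + N) =
  \sum_(T : {set 'I_n}) (\prod_(i in ~: T) d 0 i) * \det (principal_mx N T).
Proof.
have expand_row (s : 'S_n) : (-1) ^+ s * \prod_i (diag_mx d + N) i (s i) =
    \sum_(T : {set 'I_n}) (-1) ^+ s *
      \prod_i (if i \in T then N i (s i) else d 0 i *+ (i == s i)).
  rewrite (eq_bigr (fun i => N i (s i) + d 0 i *+ (i == s i))); last first.
    by move=> i _; rewrite !mxE addrC.
  by rewrite bigA_distr mulr_sumr.
rewrite /determinant (eq_bigr _ (fun s _ => expand_row s)) exchange_big /=.
apply: eq_bigr => T _; rewrite mulr_sumr; apply: eq_bigr => s _.
rewrite mulrCA; congr (_ * _).
rewrite (big_mkcond (fun i => i \in ~: T)) -big_split /=.
apply: eq_bigr => i _; rewrite in_setC mxE.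
by case: (i \in T); rewrite /= ?mul1r ?mulr_natr.
Qed.

Lemma det_principal_diag n (v : 'rV[Rg]_n) T :
  \det (principal_mx (diag_mx v) T) = \prod_(i in T) v 0 i.
Proof.
have -> : principal_mx (diag_mx v) T = diag_mx (\row_i if i \in T then v 0 i else 1).
  apply/matrixP => i j; rewrite !mxE.
  by case: (i \in T); case: (i == j); rewrite ?mulr1n ?mulr0n.
rewrite det_diag [RHS]big_mkcond /=.
by apply: eq_bigr => i _; rewrite mxE; case: (i \in T).
Qed.

Lemma selection_mx_exists n (T : {set 'I_n}) :
  exists E : 'M[Rg]_(#|T|, n), E *m E^T = 1%:M /\ E^T *m E = indic_mx T.
Proof.
exists (\matrix_(c, j) (j == enum_val c)%:R); split.
  apply/matrixP => c d; rewrite !mxE (bigD1 (enum_val c)) //= big1; last first.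
    by move=> j /negbTE jc; rewrite !mxE jc mul0r.
  by rewrite !mxE eqxx mul1r addr0 (inj_eq enum_val_inj) eq_sym.
apply/matrixP => i j; rewrite !mxE.
under eq_bigr => c _ do rewrite !mxE.
rewrite -(big_enum_val (fun x => (i == x)%:R * (j == x)%:R)) /=.
rewrite (big_mkcond (fun x => x \in T)) (bigD1 i) //= big1; last first.
  by move=> x /negbTE ix; rewrite eq_sym ix mul0r if_same.
rewrite eqxx mul1r addr0 eq_sym.
by case: (i \in T); case: (i == j); rewrite ?mulr1n ?mulr0n.
Qed.

Lemma det_principal_selection m n (E : 'M[Rg]_(m, n)) (N : 'M[Rg]_n) T :
  E *m E^T = 1%:M -> E^T *m E = indic_mx T ->
  \det (principal_mx N T) = \det (E *m N *m E^T).
Proof.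
move=> EEt EtE; rewrite principal_mxE -EtE.
have -> : 1%:M + E^T *m E *m N - E^T *m E = 1%:M + E^T *m (E *m N - E).
  by rewrite mulmxBr !mulmxA addrA.
by rewrite det_sylvester mulmxBl EEt addrC subrK.
Qed.

Lemma det_principal_gram m n (T : {set 'I_n}) (B : 'M[Rg]_(m, n)) (v : 'rV[Rg]_n) :
  #|T| = m ->
  \det (principal_mx (diag_mx v *m (B^T *m B) *m diag_mx v) T) =
  (\prod_(i in T) v 0 i) ^+ 2 * \det (B *m indic_mx T *m B^T).
Proof.
move=> cardT; have [E [EEt EtE]] := selection_mx_exists T.
move: E EEt EtE; rewrite cardT => E EEt EtE.
set D := diag_mx v; pose DT := E *m D *m E^T.
have PD : indic_mx T *m D = D *m indic_mx T.
  apply/matrixP => i j; rewrite /D /indic_mx mul_diag_mx mul_mx_diag !mxE.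
  by case: eqP => [->|_]; rewrite ?mulr0n ?mulr0 ?mul0r // mulrC.
have EP : E *m indic_mx T = E by rewrite -EtE mulmxA EEt mul1mx.
have ED : E *m D = DT *m E by rewrite /DT -!mulmxA EtE -PD mulmxA EP.
have DE : D *m E^T = E^T *m DT.
  have := congr1 trmx ED; rewrite !trmx_mul trmxK tr_diag_mx => ->.
  by rewrite /DT !mulmxA.
have -> : \det (principal_mx (D *m (B^T *m B) *m D) T) =
    \det DT * \det ((B *m E^T)^T *m (B *m E^T)) * \det DT.
  rewrite (det_principal_selection _ EEt EtE) -!det_mulmx.
  transitivity (\det ((E *m D) *m (B^T *m B) *m (D *m E^T))); first by rewrite !mulmxA.
  by rewrite ED DE trmx_mul trmxK !mulmxA.
have -> : \det DT = \prod_(i in T) v 0 i.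
  by rewrite -det_principal_diag (det_principal_selection _ EEt EtE).
have -> : B *m indic_mx T *m B^T = (B *m E^T) *m (B *m E^T)^T.
  by rewrite trmx_mul trmxK -EtE !mulmxA.
by rewrite !det_mulmx det_tr; ring.
Qed.

End PrincipalMinors.

Lemma map_principal_mx (Rg Rg' : comNzRingType) (f : {rmorphism Rg -> Rg'}) n
    (N : 'M[Rg]_n) T :
  map_mx f (principal_mx N T) = principal_mx (map_mx f N) T.
Proof. by apply/matrixP => i j; rewrite !mxE; case: (i \in T); rewrite ?rmorph_nat. Qed.

Lemma map_indic_mx (Rg Rg' : comNzRingType) (f : {rmorphism Rg -> Rg'}) n
    (T : {set 'I_n}) :
  map_mx f (indic_mx Rg T) = indic_mx Rg' T.
Proof.
by rewrite /indic_mx map_diag_mx; congr diag_mx; apply/rowP => i; rewrite !mxE rmorph_nat.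
Qed.

Section Supersets.
Variables (Rg : comNzRingType) (n : nat).
Implicit Types (S T V W : {set 'I_n}).

Lemma prod_1D_sum_supsets (y : 'I_n -> Rg) T :
  (\prod_(i in ~: T) (1 + y i)) * (\prod_(i in T) y i) =
  \sum_(V : {set 'I_n} | T \subset V) \prod_(i in V) y i.
Proof.
have -> : (\prod_(i in ~: T) (1 + y i)) * (\prod_(i in T) y i) =
    \prod_i (y i + (if i \in T then 0 else 1)).
  rewrite [X in X * _]big_mkcond [X in _ * X]big_mkcond -big_split /=.
  apply: eq_bigr => i _; rewrite in_setC.
  by case: (i \in T); rewrite /= ?mul1r ?mulr1 ?addr0 // addrC.
rewrite bigA_distr [RHS]big_mkcond /=; apply: eq_bigr => V _.
have [TV|] := boolP (T \subset V); last first.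
  by case/subsetPn => i iT /negbTE iV; rewrite (bigD1 i) //= iV iT mul0r.
rewrite [RHS]big_mkcond /=; apply: eq_bigr => i _.
case iV: (i \in V) => //.
by have /negbTE -> : i \notin T by apply: contraFN iV; apply: (subsetP TV).
Qed.

Lemma card_setI_eq_subset S V : (#|S| == #|V :&: S|) = (S \subset V).
Proof.
rewrite eq_sym (subset_leqif_cards (subsetIr V S)).2.
by apply/idP/idP => [/eqP <-|/setIidPr ->]; rewrite ?subsetIl.
Qed.

Lemma supset_decomp S T W : W \subset ~: (S :|: T) ->
  (W :|: (S :|: T)) :\: S = W :|: (T :\: S) /\ [disjoint W & T :\: S].
Proof.
move=> WST; have outW i : i \in W -> (i \notin S) && (i \notin T).
  by move=> iW; have := subsetP WST i iW; rewrite !inE negb_or.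
split.
  apply/setP => i; rewrite !inE; case iW: (i \in W) => /=.
    by case/andP: (outW i iW) => /negbTE -> _.
  by case: (i \in S); case: (i \in T).
rewrite disjoints_subset; apply/subsetP => i iW; rewrite !inE.
by case/andP: (outW i iW) => -> ->.
Qed.

Lemma sum_supsets_card (x : 'I_n -> Rg) S T b :
  \sum_(V : {set 'I_n} | T \subset V)
     (\prod_(i in V :\: S) x i) * ((#|V :\: S| == b) && (S \subset V))%:R
  = if (#|T :\: S| <= b)%N then
      (\prod_(i in T :\: S) x i) *
      \sum_(W : {set 'I_n} | (W \subset ~: (S :|: T)) && (#|W| == b - #|T :\: S|)%N)
         \prod_(i in W) x i
    else 0.
Proof.
set U := S :|: T.
have -> : \sum_(V : {set 'I_n} | T \subset V)
     (\prod_(i in V :\: S) x i) * ((#|V :\: S| == b) && (S \subset V))%:R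
   = \sum_(V : {set 'I_n} | U \subset V) (\prod_(i in V :\: S) x i) * (#|V :\: S| == b)%:R.
  rewrite big_mkcond [RHS]big_mkcond; apply: eq_bigr => V _; rewrite /U subUset.
  by case: (T \subset V); case: (S \subset V); rewrite /= ?andbT ?andbF ?mulr0.
rewrite (reindex_onto (fun W => W :|: U) (fun V => V :\: U)); last first.
  move=> V UV; apply/setP => i; rewrite in_setU in_setD.
  by case iU: (i \in U); rewrite /= ?orbF // (subsetP UV).
rewrite (eq_bigl (fun W => W \subset ~: U)); last first.
  move=> W; rewrite subsetUr /=; apply/eqP/idP => [<-|WU].
    by apply/subsetP => i; rewrite in_setD in_setC; case/andP.
  apply/setP => i; rewrite in_setD in_setU; case iW: (i \in W) => /=.
    by have := subsetP WU i iW; rewrite in_setC => ->.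
  by case: (i \in U).
have term W : W \subset ~: U ->
    (\prod_(i in (W :|: U) :\: S) x i) * (#|(W :|: U) :\: S| == b)%:R =
    (\prod_(i in T :\: S) x i) * (\prod_(i in W) x i) *
    ((#|T :\: S| <= b)%N && (#|W| == b - #|T :\: S|)%N)%:R.
  move=> WU; have [-> disjWT] := supset_decomp WU.
  rewrite (eq_bigl [predU W & T :\: S]); last by move=> i; rewrite !inE.
  rewrite bigU // cardsU (disjoint_setI0 disjWT) cards0 subn0.
  rewrite [X in X * _]mulrC; congr (_ * _%:R); case: (leqP #|T :\: S| b) => bT /=.
    by rewrite -(eqn_add2r #|T :\: S| #|W|) subnK.
  by rewrite gtn_eqF // ltn_addl.
rewrite /= (eq_bigr _ term); case: leqP => bT; last by rewrite big1 // => W _; rewrite mulr0.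
rewrite mulr_sumr big_mkcond [RHS]big_mkcond /=; apply: eq_bigr => W _.
by case: (W \subset ~: U); case: (_ == _); rewrite /= ?mulr1 ?mulr0.
Qed.

End Supersets.

Section FpolyCoefficients.
Variable R : realType.
Local Notation Q := {poly {poly R}}.

(* The t1-free data of [Fpoly] over Q, whose outer variable is u2 and whose
   inner variable is u3 (so that [U2 = 'X%:P] and [U3 = 'X%:P%:P] in [PR]). *)
Definition ysqrtQ n (x : 'I_n -> R) (S : {set 'I_n}) : 'rV[Q]_n :=
  \row_i (if i \in S then 'X%:P else (Num.sqrt (x i))%:P%:P * 'X).

Definition yvecQ n (x : 'I_n -> R) (S : {set 'I_n}) : 'rV[Q]_n :=
  \row_i (if i \in S then 'X%:P ^+ 2 else (x i)%:P%:P * 'X ^+ 2).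

Definition liftQ m n (A : 'M[R]_(m, n)) : 'M[Q]_(m, n) := map_mx polyC (map_mx polyC A).

Definition gramQ m n (A : 'M[R]_(m, n)) x S : 'M[Q]_n :=
  diag_mx (ysqrtQ x S) *m ((liftQ A)^T *m liftQ A) *m diag_mx (ysqrtQ x S).

Lemma Fpoly_diag_addmx m n (A : 'M[R]_(m, n)) x S :
  Fpoly A x S =
  \det (diag_mx (\row_i (1 + yvecQ x S 0 i)%:P) + 'X *: map_mx polyC (gramQ A x S)).
Proof.
rewrite /Fpoly; congr (\det _).
have -> : diag_mx (ysqrt x S) = map_mx polyC (diag_mx (ysqrtQ x S)).
  rewrite map_diag_mx; congr diag_mx; apply/rowP => i; rewrite !mxE.
  by case: (i \in S); rewrite ?rmorphM.
have -> : map_mx (@cst R) (A^T *m A) = map_mx polyC ((liftQ A)^T *m liftQ A).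
  apply/matrixP => i j; rewrite !mxE /cst !rmorph_sum; apply: eq_bigr => l _.
  by rewrite !mxE !rmorphM.
rewrite -!map_mxM -/(gramQ A x S) addrAC; congr (_ + _).
apply/matrixP => i j; rewrite !mxE; case: (i == j); rewrite ?mulr1n ?mulr0n ?addr0 //.
rewrite rmorphD rmorph1; congr (_ + _).
by case: (i \in S); rewrite /T3 /T2 /U3 /U2 /cst ?rmorphM ?rmorphXn.
Qed.

Lemma gram_on_indic m n (A : 'M[R]_(m, n)) (T : {set 'I_n}) : gram_on A T = A *m indic_mx R T *m A^T.
Proof.
apply/matrixP => p q; rewrite /gram_on summxE !mxE big_mkcond /=.
apply: eq_bigr => i _; rewrite mul_mx_diag !mxE big_ord1 !mxE.
by case: (i \in T); rewrite ?mulr1 ?mulr0 ?mul0r.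
Qed.

Lemma det_principal_gramQ m n (A : 'M[R]_(m, n)) (x : 'I_n -> R) (S T : {set 'I_n}) :
  (forall i, 0 <= x i) -> #|T| = m ->
  \det (principal_mx (gramQ A x S) T) =
  (\prod_(i in T) yvecQ x S 0 i) * (\det (gram_on A T))%:P%:P.
Proof.
move=> x_ge0 cardT; rewrite det_principal_gram // -prodrXl.
have -> : liftQ A *m indic_mx _ T *m (liftQ A)^T =
    map_mx polyC (map_mx polyC (gram_on A T)).
  by rewrite gram_on_indic /liftQ !map_mxM !map_trmx !map_indic_mx.
rewrite !det_map_mx; congr (_ * _); apply: eq_bigr => i _; rewrite !mxE.
by case: (i \in S); rewrite // exprMn -!rmorphXn sqr_sqrtr.
Qed.

Lemma coef_Fpoly_t1 m n (A : 'M[R]_(m, n)) (x : 'I_n -> R) (S : {set 'I_n}) :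
  (forall i, 0 <= x i) ->
  (Fpoly A x S)`_m =
  \sum_(T : {set 'I_n} | #|T| == m)
     (\det (gram_on A T))%:P%:P *
     \sum_(V : {set 'I_n} | T \subset V) \prod_(i in V) yvecQ x S 0 i.
Proof.
move=> x_ge0; rewrite Fpoly_diag_addmx det_diag_addmx coef_sum [RHS]big_mkcond /=.
apply: eq_bigr => T _; rewrite det_principal_mxZ -map_principal_mx det_map_mx.
under eq_bigr do rewrite mxE.
rewrite -rmorph_prod mulrCA -rmorphM coefMC coefXn eq_sym.
case: eqP => [cardT|_]; last by rewrite mul0r.
by rewrite mul1r det_principal_gramQ // mulrA prod_1D_sum_supsets mulrC.
Qed.

Lemma coef_prod_yvecQ n (x : 'I_n -> R) (S V : {set 'I_n}) b :
  ((\prod_(i in V) yvecQ x S 0 i)`_(2 * b))`_(2 * #|S|) =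
  (\prod_(i in V :\: S) x i) * ((#|V :\: S| == b) && (S \subset V))%:R.
Proof.
have -> : \prod_(i in V) yvecQ x S 0 i =
    (\prod_(i in V :\: S) x i)%:P%:P * 'X ^+ (2 * #|V :\: S|) *
    ('X ^+ (2 * #|V :&: S|))%:P :> Q.
  rewrite (bigID (fun i => i \in S)) /= mulrC.
  rewrite (eq_bigr (fun i => (x i)%:P%:P * 'X ^+ 2)); last first.
    by move=> i /andP [_ /negbTE iS]; rewrite mxE iS.
  rewrite [X in _ * X](eq_bigr (fun _ => 'X%:P ^+ 2)); last by move=> i /andP [_ iS]; rewrite mxE iS.
  rewrite big_split !prodr_const -!exprM -!rmorph_prod rmorphXn.
  have eqVS : [pred i | (i \in V) && (i \notin S)] =i V :\: S.
    by move=> i; rewrite !inE andbC.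
  have eqVIS : [pred i | (i \in V) && (i \in S)] =i V :&: S by move=> i; rewrite !inE.
  by rewrite (eq_bigl _ _ eqVS) (eq_card eqVS) (eq_card eqVIS).
rewrite coefMC coefCM coefXn eqn_mul2l /= [(b == _)]eq_sym.
case: (_ == b); rewrite /= ?mulr0 ?mul0r ?coef0 // mulr1 coefCM coefXn.
by rewrite eqn_mul2l /= card_setI_eq_subset.
Qed.

End FpolyCoefficients.

Unset Implicit Arguments.

Theorem proposition3 (R : realType) (m k n : nat) (A : 'M[R]_(m, n))
  (xhat : 'I_n -> R) (S : {set 'I_n}) :
  (0 < m)%N -> (m <= k)%N -> (k <= n)%N ->
  (exists what : R, relax_optimal A k xhat what) ->
  (#|S| <= k)%N ->
  coef3 (Fpoly A xhat S) m (k - #|S|) #|S| =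
  \sum_(Rs : {set 'I_n} | (#|Rs| == m) && (#|Rs :\: S| <= k - #|S|)%N)
     (\prod_(j in Rs :\: S) xhat j) * \det (gram_on A Rs) *
     \sum_(W : {set 'I_n} | (W \subset ~: (S :|: Rs))
                             && (#|W| == k - #|S| - #|Rs :\: S|)%N)
        \prod_(j in W) xhat j.
Proof.
move=> _ _ _ [w [[_ xhat01 _] _]] _.
have xhat_ge0 i : 0 <= xhat i by case/andP: (xhat01 i).
rewrite /coef3 coef_Fpoly_t1 // !coef_sum big_mkcondr /=; apply: eq_bigr => T _.
rewrite !coefCM !coef_sum (eq_bigr _ (fun V _ => coef_prod_yvecQ xhat S V _)).
by rewrite sum_supsets_card; case: ifP; rewrite ?mulr0 // mulrCA mulrA.
Qed.
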